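(* Let $(X,d)$ be a compact metric space and $f\in\mathcal{H}(X)$. If $\dim X=0$ and every point of $X$ is a periodic point of $f$ (i.e. $X=Per(f)$), then $f$ is equicontinuous and has the strict periodic shadowing property.
   Context: Equicontinuous: for every $\epsilon>0$ there is $\delta>0$ with $d(x,y)\le\delta\Rightarrow\sup_{i\in\mathbb{Z}}d(f^i(x),f^i(y))\le\epsilon$. Strict periodic shadowing property: for every $\epsilon>0$ there is $\delta>0$ such that for every $(x_i)_{i=0}^m$, $m\ge1$, with $d(f(x_i),x_{i+1})\le\delta$ for $0\le i<m$ and $x_0=x_m$, there is $p\in X$ with $f^m(p)=p$ and $d(x_i,f^i(p))\le\epsilon$ for $0\le i\le m$. *)

From Stdlib Require Import Reals List ZArith.
Open Scope R_scope.

Record MetricSpace := {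
  carrier :> Type;
  dist : carrier -> carrier -> R;
  dist_nonneg : forall x y, 0 <= dist x y;
  dist_sym : forall x y, dist x y = dist y x;
  dist_zero : forall x y, dist x y = 0 <-> x = y;
  dist_triangle : forall x y z, dist x z <= dist x y + dist y z
}.

Section MS.
Context {X : MetricSpace}.

Definition is_open (U : X -> Prop) : Prop :=
  forall x, U x -> exists r, 0 < r /\ forall y, dist X x y < r -> U y.

Definition is_closed (F : X -> Prop) : Prop := is_open (fun x => ~ F x).

Definition compact_space : Prop :=
  forall (I : Type) (U : I -> X -> Prop),
    (forall i, is_open (U i)) -> (forall x, exists i, U i x) ->
    exists l : list I, forall x, exists i, In i l /\ U i x.

(* Small inductive dimension 0 (dim X <= 0): X has a base of clopen sets. *)
Definition dim_zero : Prop :=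
  forall (x : X) (eps : R), 0 < eps ->
    exists U : X -> Prop, is_open U /\ is_closed U /\ U x /\
      forall y, U y -> dist X x y < eps.

Definition continuous (f : X -> X) : Prop :=
  forall x eps, 0 < eps -> exists delta, 0 < delta /\
    forall y, dist X x y < delta -> dist X (f x) (f y) < eps.

Definition is_homeomorphism (f finv : X -> X) : Prop :=
  continuous f /\ continuous finv /\
  (forall x, finv (f x) = x) /\ (forall x, f (finv x) = x).

Definition zpow (f finv : X -> X) (i : Z) (x : X) : X :=
  match i with
  | Z0 => x
  | Zpos p => Nat.iter (Pos.to_nat p) f x
  | Zneg p => Nat.iter (Pos.to_nat p) finv x
  end.

Definition periodic_point (f : X -> X) (x : X) : Prop :=
  exists n : nat, (1 <= n)%nat /\ Nat.iter n f x = x.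

Definition equicontinuous (f finv : X -> X) : Prop :=
  forall eps, 0 < eps -> exists delta, 0 < delta /\
    forall x y, dist X x y <= delta ->
      forall i : Z, dist X (zpow f finv i x) (zpow f finv i y) <= eps.

Definition strict_periodic_shadowing (f : X -> X) : Prop :=
  forall eps, 0 < eps -> exists delta, 0 < delta /\
    forall (xs : nat -> X) (m : nat), (1 <= m)%nat ->
      (forall i, (i < m)%nat -> dist X (f (xs i)) (xs (S i)) <= delta) ->
      xs 0%nat = xs m ->
      exists p : X, Nat.iter m f p = p /\
        forall i, (i <= m)%nat -> dist X (xs i) (Nat.iter i f p) <= eps.

End MS.

From Pilot Require Import Defs.
From Stdlib Require Import Reals List ZArith Lra Lia Classical Wf_nat.
Open Scope R_scope.

(* Fix a finite clopen partition of small mesh and compare orbits through the cells they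
   visit. If [y] is close to a periodic point [x], the forward orbit of [y] visits the same
   cells as that of [x]: otherwise the clopen sets of points whose [n]-step backward orbit
   follows the cells of the backward orbit of [x], but whose forward orbit leaves those of
   [x] within one period of [x], are nonempty and nested, hence by compactness share a
   point, and the periodicity of that point contradicts its membership. Applying this to
   [f] and its inverse and using compactness again gives a uniform [delta] below which
   whole orbits visit the same cells, i.e. equicontinuity. A closed [delta]-pseudo-orbit
   visits the same cells as the true orbit of its first point, which therefore nearly
   returns; so does the orbit of a nearby periodic point [c], and as the orbit of [c] is
   finite a near return is an exact one, so [c] shadows the pseudo-orbit. *)

Lemma list_positive_lower_bound {A : Type} (w : A -> R) (l : list A) :
  (forall a, In a l -> 0 < w a) -> exists s, 0 < s /\ forall a, In a l -> s <= w a.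
Proof.
  induction l as [|a l IH]; intro Hpos.
  - exists 1; split; [lra | intros a []].
  - destruct IH as [s [Hs Hle]]; [intros b Hb; apply Hpos; right; exact Hb|].
    exists (Rmin s (w a)); split.
    + apply Rmin_glb_lt; [exact Hs | apply Hpos; left; reflexivity].
    + intros b [<-|Hb]; [apply Rmin_r|].
      eapply Rle_trans; [apply Rmin_l | exact (Hle b Hb)].
Qed.

Section Iterates.
Variables (A : Type) (g ginv : A -> A).

Lemma iter_period_mul q x m : Nat.iter q g x = x -> Nat.iter (q * m) g x = x.
Proof.
  intro Hx; induction m as [|m IH]; [rewrite Nat.mul_0_r; reflexivity|].
  rewrite Nat.mul_succ_r, Nat.iter_add, Hx; exact IH.
Qed.

Lemma iter_period_mod q x k : Nat.iter q g x = x -> Nat.iter k g x = Nat.iter (k mod q) g x.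
Proof.
  intro Hx; transitivity (Nat.iter (k mod q + q * (k / q)) g x).
  - f_equal; pose proof (Nat.div_mod_eq k q); lia.
  - rewrite Nat.iter_add, iter_period_mul; auto.
Qed.

Hypotheses (Hgi : forall x, ginv (g x) = x) (Hig : forall x, g (ginv x) = x).

Lemma iter_cancel n x : Nat.iter n ginv (Nat.iter n g x) = x.
Proof. induction n as [|n IH]; [reflexivity|]. rewrite Nat.iter_succ_r, Nat.iter_succ, Hgi; exact IH. Qed.

Lemma iter_cancel_le n s x : (n <= s)%nat -> Nat.iter n ginv (Nat.iter s g x) = Nat.iter (s - n) g x.
Proof.
  intro Hns; transitivity (Nat.iter n ginv (Nat.iter (n + (s - n)) g x)).
  - do 2 f_equal; lia.
  - rewrite Nat.iter_add; apply iter_cancel.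
Qed.

Lemma iter_inv_fixed n x : Nat.iter n g x = x -> Nat.iter n ginv x = x.
Proof. intro Hx; transitivity (Nat.iter n ginv (Nat.iter n g x)); [rewrite Hx; reflexivity | apply iter_cancel]. Qed.

Lemma iter_shift j n x : Nat.iter (S j) g (Nat.iter (S n) ginv x) = Nat.iter j g (Nat.iter n ginv x).
Proof. rewrite Nat.iter_succ_r, Nat.iter_succ, Hig; reflexivity. Qed.

End Iterates.

Section LocallyConstant.
Variable X : MetricSpace.
Notation d := (Defs.dist X).

Lemma dist_self (x : X) : d x x = 0.
Proof. apply Defs.dist_zero; reflexivity. Qed.

Lemma ball_open (c : X) r : is_open (fun y => d c y < r).
Proof.
  intros z Hz; exists (r - d c z); split; [lra|].
  intros y Hy; pose proof (Defs.dist_triangle X c z y); lra.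
Qed.

Definition locally_constant (P : X -> Prop) : Prop :=
  forall x, exists r, 0 < r /\ forall y, d x y < r -> (P y <-> P x).

Lemma locally_constant_open P : locally_constant P -> is_open P.
Proof.
  intros HP x Px; destruct (HP x) as [r [Hr Hball]].
  exists r; split; [exact Hr|]; intros y Hy; apply (Hball y Hy), Px.
Qed.

Lemma clopen_locally_constant U : is_open U -> is_closed U -> locally_constant U.
Proof.
  intros HU HUc x; destruct (classic (U x)) as [Ux|Ux].
  - destruct (HU x Ux) as [r [Hr Hball]]; exists r; split; [exact Hr|]; intros y Hy; split; auto.
  - destruct (HUc x Ux) as [r [Hr Hball]]; exists r; split; [exact Hr|].
    intros y Hy; specialize (Hball y Hy); tauto.
Qed.

Lemma locally_constant_ext P Q : (forall z, P z <-> Q z) -> locally_constant P -> locally_constant Q.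
Proof.
  intros HPQ HP x; destruct (HP x) as [r [Hr Hball]].
  exists r; split; [exact Hr|]; intros y Hy; rewrite <- !HPQ; auto.
Qed.

Lemma locally_constant_const (C : Prop) : locally_constant (fun _ => C).
Proof. intro x; exists 1; split; [lra | tauto]. Qed.

Lemma locally_constant_not P : locally_constant P -> locally_constant (fun z => ~ P z).
Proof.
  intros HP x; destruct (HP x) as [r [Hr Hball]].
  exists r; split; [exact Hr|]; intros y Hy; specialize (Hball y Hy); tauto.
Qed.

Lemma locally_constant_pair P Q : locally_constant P -> locally_constant Q ->
  forall x, exists r, 0 < r /\ forall y, d x y < r -> (P y <-> P x) /\ (Q y <-> Q x).
Proof.
  intros HP HQ x; destruct (HP x) as [r1 [Hr1 H1]], (HQ x) as [r2 [Hr2 H2]].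
  exists (Rmin r1 r2); split; [apply Rmin_glb_lt; assumption|].
  intros y Hy; split; [apply H1 | apply H2];
    eapply Rlt_le_trans; eauto; [apply Rmin_l | apply Rmin_r].
Qed.

Lemma locally_constant_and P Q : locally_constant P -> locally_constant Q ->
  locally_constant (fun z => P z /\ Q z).
Proof.
  intros HP HQ x; destruct (locally_constant_pair P Q HP HQ x) as [r [Hr Hball]].
  exists r; split; [exact Hr|]; intros y Hy; specialize (Hball y Hy); tauto.
Qed.

Lemma locally_constant_iff P Q : locally_constant P -> locally_constant Q ->
  locally_constant (fun z => P z <-> Q z).
Proof.
  intros HP HQ x; destruct (locally_constant_pair P Q HP HQ x) as [r [Hr Hball]].
  exists r; split; [exact Hr|]; intros y Hy; specialize (Hball y Hy); tauto.
Qed.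

Lemma locally_constant_forall_in {I : Type} (l : list I) (F : I -> X -> Prop) :
  (forall i, In i l -> locally_constant (F i)) ->
  locally_constant (fun z => forall i, In i l -> F i z).
Proof.
  intro HF; apply (locally_constant_ext (fun z => Forall (fun i => F i z) l)).
  { intro z; apply Forall_forall. }
  induction l as [|a l IH].
  - apply (locally_constant_ext (fun _ => True)); [intro z; split; auto | apply locally_constant_const].
  - apply (locally_constant_ext (fun z => F a z /\ Forall (fun i => F i z) l)).
    { intro z; symmetry; apply Forall_cons_iff. }
    apply locally_constant_and; [apply HF; left; reflexivity|].
    apply IH; intros i Hi; apply HF; right; exact Hi.
Qed.

Lemma locally_constant_forall_lt n (F : nat -> X -> Prop) :
  (forall j, locally_constant (F j)) ->
  locally_constant (fun z => forall j, (j < n)%nat -> F j z).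
Proof.
  intro HF; apply (locally_constant_ext (fun z => forall j, In j (seq 0 n) -> F j z)).
  - intro z; split; intros Hall j Hj; apply Hall; rewrite in_seq in *; lia.
  - apply locally_constant_forall_in; auto.
Qed.

Lemma locally_constant_exists_lt n (F : nat -> X -> Prop) :
  (forall j, locally_constant (F j)) ->
  locally_constant (fun z => exists j, (j < n)%nat /\ F j z).
Proof.
  intro HF; apply (locally_constant_ext (fun z => ~ forall j, (j < n)%nat -> ~ F j z)).
  - intro z; split.
    + intro Hnot; apply NNPP; intro Hno; apply Hnot; intros j Hj Fj; apply Hno; eauto.
    + intros [j [Hj Fj]] Hall; exact (Hall j Hj Fj).
  - apply locally_constant_not, locally_constant_forall_lt; intro j; apply locally_constant_not, HF.
Qed.

Lemma locally_constant_comp (g : X -> X) P : continuous g -> locally_constant P ->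
  locally_constant (fun z => P (g z)).
Proof.
  intros Hg HP x; destruct (HP (g x)) as [r [Hr Hball]].
  destruct (Hg x r Hr) as [de [Hde Hcont]].
  exists de; split; [exact Hde|]; intros y Hy; apply Hball, Hcont, Hy.
Qed.

Lemma continuous_iter (g : X -> X) n : continuous g -> continuous (Nat.iter n g).
Proof.
  intro Hg; induction n as [|n IH]; intros x eps Heps.
  - exists eps; split; auto.
  - destruct (Hg (Nat.iter n g x) eps Heps) as [d1 [Hd1 H1]].
    destruct (IH x d1 Hd1) as [d2 [Hd2 H2]].
    exists d2; split; [exact Hd2|]; intros y Hy; apply H1, H2, Hy.
Qed.

Definition same_cells (L : list (X -> Prop)) (a b : X) : Prop :=
  forall U, In U L -> (U a <-> U b).

Lemma same_cells_refl L a : same_cells L a a.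
Proof. intros U _; reflexivity. Qed.

Lemma same_cells_sym L a b : same_cells L a b -> same_cells L b a.
Proof. intros H U HU; symmetry; exact (H U HU). Qed.

Lemma same_cells_trans L a b c : same_cells L a b -> same_cells L b c -> same_cells L a c.
Proof. intros H1 H2 U HU; rewrite (H1 U HU); exact (H2 U HU). Qed.

Lemma same_cells_locally_constant L c : (forall U, In U L -> locally_constant U) ->
  locally_constant (fun z => same_cells L z c).
Proof.
  intro HL; apply (locally_constant_forall_in L (fun U z => U z <-> U c)).
  intros U HU; apply locally_constant_iff; [exact (HL U HU) | apply locally_constant_const].
Qed.

End LocallyConstant.

Section Compact.
Variable X : MetricSpace.
Notation d := (Defs.dist X).
Hypothesis Hcomp : @compact_space X.

Lemma compact_nested_locally_constant (A : nat -> X -> Prop) :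
  (forall n, locally_constant X (A n)) -> (forall n u, A (S n) u -> A n u) ->
  (forall n, exists u, A n u) -> exists u, forall n, A n u.
Proof.
  intros Hlc Hdec Hne; apply NNPP; intro Hempty.
  destruct (Hcomp nat (fun n z => ~ A n z)) as [l Hl].
  - intro n; apply locally_constant_open, locally_constant_not, Hlc.
  - intro x; apply NNPP; intro Hx; apply Hempty; exists x.
    intro n; apply NNPP; intro Hn; apply Hx; exists n; exact Hn.
  - assert (Hmono : forall n m, (n <= m)%nat -> forall u, A m u -> A n u)
      by (intros n m Hnm; induction Hnm; auto).
    destruct (Hne (list_max l)) as [u Hu], (Hl u) as [i [Hi Hiu]].
    apply Hiu, (Hmono i (list_max l)); [|exact Hu].
    exact (proj1 (Forall_forall _ l) (proj1 (list_max_le l _) (le_n _)) i Hi).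
Qed.

Lemma lebesgue_number (P : X -> R -> Prop) : (forall x, exists r, 0 < r /\ P x r) ->
  exists s, 0 < s /\ forall y, exists x r, P x r /\ s <= r /\ forall z, d y z <= s -> d x z < r.
Proof.
  intro Hloc; set (I := {p : X * R | 0 < snd p /\ P (fst p) (snd p)}).
  destruct (Hcomp I (fun i z => d (fst (proj1_sig i)) z < snd (proj1_sig i) / 2)) as [l Hl].
  - intro i; apply ball_open.
  - intro x; destruct (Hloc x) as [r [Hr Hx]].
    exists (exist _ (x, r) (conj Hr Hx)); simpl; rewrite dist_self; lra.
  - destruct (list_positive_lower_bound (fun i : I => snd (proj1_sig i) / 2) l) as [s [Hs Hmin]].
    { intros [[c r] [Hr Hc]] _; simpl in *; lra. }
    exists s; split; [exact Hs|]; intro y.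
    destruct (Hl y) as [[[c r] [Hr Hc]] [Hin Hy]]; specialize (Hmin _ Hin); simpl in *.
    exists c, r; split; [exact Hc | split; [lra|]].
    intros z Hz; pose proof (Defs.dist_triangle X c y z); lra.
Qed.

Lemma small_clopen_partition (Hdim : @dim_zero X) eta : 0 < eta ->
  exists L, (forall U, In U L -> locally_constant X U) /\
    forall a b, same_cells X L a b -> d a b < eta.
Proof.
  intro Heta.
  set (I := {U : X -> Prop | locally_constant X U /\ forall a b, U a -> U b -> d a b < eta}).
  destruct (Hcomp I (fun i => proj1_sig i)) as [l Hl].
  - intros [U [HU Hdiam]]; apply locally_constant_open, HU.
  - intro x; destruct (Hdim x (eta / 2)) as [U [Hopen [Hclosed [Ux Hsmall]]]]; [lra|].
    assert (Hdiam : forall a b, U a -> U b -> d a b < eta).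
    { intros a b Ua Ub; pose proof (Hsmall a Ua); pose proof (Hsmall b Ub).
      pose proof (Defs.dist_triangle X a x b); rewrite (Defs.dist_sym X a x) in *; lra. }
    exists (exist _ U (conj (clopen_locally_constant X U Hopen Hclosed) Hdiam)); exact Ux.
  - exists (map (fun i : I => proj1_sig i) l); split.
    + intros U HU; apply in_map_iff in HU; destruct HU as [[V [HV Hdiam]] [<- _]]; exact HV.
    + intros a b Hab; destruct (Hl a) as [[U [HU Hdiam]] [Hin Ua]]; simpl in Ua.
      apply Hdiam; [exact Ua|]; apply (Hab U); [|exact Ua].
      exact (in_map (fun i : I => proj1_sig i) l _ Hin).
Qed.

Section Tracking.
Variables (g ginv : X -> X) (E : X -> X -> Prop).
Hypotheses (Hg : continuous g) (Hginv : continuous ginv)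
  (Hgi : forall x, ginv (g x) = x) (Hig : forall x, g (ginv x) = x)
  (Hper : forall x, periodic_point g x)
  (E_refl : forall x, E x x) (E_lc : forall c, locally_constant X (fun z => E z c)).

Definition escape_set (x : X) q n (u : X) : Prop :=
  (forall j, (j < n)%nat ->
     E (Nat.iter j g (Nat.iter n ginv u)) (Nat.iter j g (Nat.iter n ginv x))) /\
  (exists t, (t < q)%nat /\ ~ E (Nat.iter t g u) (Nat.iter t g x)).

Lemma E_iter_locally_constant h j c : continuous h ->
  locally_constant X (fun z => E (Nat.iter j h z) c).
Proof.
  intro Hh; apply (locally_constant_comp X (Nat.iter j h) (fun w => E w c));
    [apply continuous_iter, Hh | apply E_lc].
Qed.

Lemma escape_set_locally_constant x q n : locally_constant X (escape_set x q n).
Proof.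
  apply locally_constant_and.
  - apply (locally_constant_forall_lt X n
      (fun j u => E (Nat.iter j g (Nat.iter n ginv u)) (Nat.iter j g (Nat.iter n ginv x)))).
    intro j; apply (locally_constant_comp X (Nat.iter n ginv)
      (fun w => E (Nat.iter j g w) (Nat.iter j g (Nat.iter n ginv x))));
      [apply continuous_iter, Hginv | apply E_iter_locally_constant, Hg].
  - apply (locally_constant_exists_lt X q (fun t u => ~ E (Nat.iter t g u) (Nat.iter t g x))).
    intro t; apply locally_constant_not, E_iter_locally_constant, Hg.
Qed.

Lemma escape_set_decreasing x q n u : escape_set x q (S n) u -> escape_set x q n u.
Proof.
  intros [Hback Hleave]; split; [|exact Hleave].
  intros j Hj; rewrite <- !(iter_shift X g ginv Hig j n); apply Hback; lia.
Qed.

(* If points arbitrarily close to [x] eventually leave its itinerary, pick one that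
   follows it for [n + q] steps, and push it forward by a multiple of the period [q]
   of [x] to just before its first departure. *)
Lemma escape_set_nonempty x q : (1 <= q)%nat -> Nat.iter q g x = x ->
  (forall r, 0 < r -> exists y, d x y < r /\ exists m, ~ E (Nat.iter m g y) (Nat.iter m g x)) ->
  forall n, exists u, escape_set x q n u.
Proof.
  intros Hq Hx Hfail n.
  destruct (locally_constant_forall_lt X (S (n + q))
    (fun j y => E (Nat.iter j g y) (Nat.iter j g x)) (fun j => E_iter_locally_constant g j _ Hg) x)
    as [r [Hr Hagree]].
  destruct (Hfail r Hr) as [y [Hy Hmiss]].
  destruct (dec_inh_nat_subset_has_unique_least_element
    (fun i => ~ E (Nat.iter i g y) (Nat.iter i g x))) as [i [[Hi Hleast] _]];
    [intro i; apply classic | exact Hmiss |].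
  assert (Hlate : (n + q < i)%nat).
  { destruct (Nat.lt_ge_cases (n + q) i) as [Hlt|Hge]; [exact Hlt|].
    exfalso; apply Hi, (proj2 (Hagree y Hy)); [intros j _; apply E_refl | lia]. }
  set (s := (q * (i / q))%nat); set (t := (i mod q)%nat).
  assert (Hsx : Nat.iter s g x = x) by (apply iter_period_mul; exact Hx).
  assert (Hts : (t + s = i)%nat) by (pose proof (Nat.div_mod_eq i q); lia).
  assert (Ht : (t < q)%nat) by (apply Nat.mod_upper_bound; lia).
  exists (Nat.iter s g y); split.
  - intros j Hj; rewrite <- Hsx.
    rewrite !(iter_cancel_le X g ginv Hgi n s) by lia; rewrite <- !Nat.iter_add.
    apply NNPP; intro Hne; specialize (Hleast _ Hne); lia.
  - exists t; split; [exact Ht|].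
    rewrite <- Hsx, <- !Nat.iter_add, Hts; exact Hi.
Qed.

Lemma escape_sets_empty_intersection x q : (1 <= q)%nat -> Nat.iter q g x = x ->
  ~ exists u, forall n, escape_set x q n u.
Proof.
  intros Hq Hx [u Hu]; destruct (Hper u) as [p [Hp Hpu]].
  destruct (Hu (p * q)%nat) as [Hback [t [Ht Hmiss]]].
  apply Hmiss; specialize (Hback t ltac:(nia)).
  rewrite !(iter_inv_fixed X g ginv Hgi (p * q)) in Hback; [exact Hback | |].
  - rewrite Nat.mul_comm; apply iter_period_mul, Hx.
  - apply iter_period_mul, Hpu.
Qed.

Lemma local_forward_tracking x : exists r, 0 < r /\
  forall y, d x y < r -> forall n, E (Nat.iter n g y) (Nat.iter n g x).
Proof.
  destruct (Hper x) as [q [Hq Hx]]; apply NNPP; intro Hno.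
  apply (escape_sets_empty_intersection x q Hq Hx).
  apply compact_nested_locally_constant;
    [apply escape_set_locally_constant | apply escape_set_decreasing |].
  apply (escape_set_nonempty x q Hq Hx).
  intros r Hr; apply NNPP; intro Hall; apply Hno; exists r; split; [exact Hr|].
  intros y Hy n; apply NNPP; intro Hn; apply Hall; exists y; split; [exact Hy|]; exists n; exact Hn.
Qed.

End Tracking.
End Compact.

Section Dynamics.
Variables (X : MetricSpace) (f finv : X -> X).
Notation d := (Defs.dist X).
Hypotheses (Hcomp : @compact_space X) (Hhomeo : is_homeomorphism f finv)
  (Hdim : @dim_zero X) (Hper : forall x : X, periodic_point f x).

Lemma periodic_point_finv x : periodic_point finv x.
Proof.
  destruct Hhomeo as [_ [_ [Hfi _]]]; destruct (Hper x) as [q [Hq Hx]].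
  exists q; split; [exact Hq | apply (iter_inv_fixed X f finv Hfi q x Hx)].
Qed.

Definition same_itinerary L (a b : X) : Prop := forall n,
  same_cells X L (Nat.iter n f a) (Nat.iter n f b) /\
  same_cells X L (Nat.iter n finv a) (Nat.iter n finv b).

Lemma same_itinerary_sym L a b : same_itinerary L a b -> same_itinerary L b a.
Proof. intros H n; destruct (H n); split; apply same_cells_sym; assumption. Qed.

Lemma same_itinerary_trans L a b c :
  same_itinerary L a b -> same_itinerary L b c -> same_itinerary L a c.
Proof.
  intros H1 H2 n; destruct (H1 n), (H2 n); split; eapply same_cells_trans; eassumption.
Qed.

Lemma same_itinerary_f L a b : same_itinerary L a b -> same_itinerary L (f a) (f b).
Proof.
  destruct Hhomeo as [_ [_ [Hfi _]]]; intros H n; split.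
  - rewrite <- !Nat.iter_succ_r; apply (H (S n)).
  - destruct n as [|n]; [apply (H 1%nat)|].
    rewrite !Nat.iter_succ_r, !Hfi; apply (H n).
Qed.

Lemma same_itinerary_finv L a b : same_itinerary L a b -> same_itinerary L (finv a) (finv b).
Proof.
  destruct Hhomeo as [_ [_ [_ Hif]]]; intros H n; split.
  - destruct n as [|n]; [apply (H 1%nat)|].
    rewrite !Nat.iter_succ_r, !Hif; apply (H n).
  - rewrite <- !Nat.iter_succ_r; apply (H (S n)).
Qed.

Lemma same_itinerary_iter_f L n a b :
  same_itinerary L a b -> same_itinerary L (Nat.iter n f a) (Nat.iter n f b).
Proof. intro H; induction n as [|n IH]; [exact H | apply same_itinerary_f, IH]. Qed.

Lemma same_itinerary_iter_finv L n a b :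
  same_itinerary L a b -> same_itinerary L (Nat.iter n finv a) (Nat.iter n finv b).
Proof. intro H; induction n as [|n IH]; [exact H | apply same_itinerary_finv, IH]. Qed.

Lemma uniform_itinerary_tracking eta : 0 < eta -> exists L,
  (forall a b, same_itinerary L a b -> d a b < eta) /\
  exists delta, 0 < delta /\ forall a b, d a b <= delta -> same_itinerary L a b.
Proof.
  intro Heta; destruct Hhomeo as [Hf [Hfinv [Hfi Hif]]].
  destruct (small_clopen_partition X Hcomp Hdim eta Heta) as [L [HL Hsmall]].
  exists L; split; [intros a b Hab; apply Hsmall, (Hab 0%nat)|].
  assert (Hlocal : forall x, exists r, 0 < r /\
    forall y, d x y < r -> same_itinerary L x y).
  { intro x.
    destruct (local_forward_tracking X Hcomp f finv (same_cells X L) Hf Hfinv Hfi Hif Hper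
      (same_cells_refl X L) (fun c => same_cells_locally_constant X L c HL) x) as [r1 [Hr1 H1]].
    destruct (local_forward_tracking X Hcomp finv f (same_cells X L) Hfinv Hf Hif Hfi
      periodic_point_finv (same_cells_refl X L) (fun c => same_cells_locally_constant X L c HL) x)
      as [r2 [Hr2 H2]].
    exists (Rmin r1 r2); split; [apply Rmin_glb_lt; assumption|].
    intros y Hy n; pose proof (Rmin_l r1 r2); pose proof (Rmin_r r1 r2).
    split; apply same_cells_sym; [apply H1 | apply H2]; lra. }
  destruct (lebesgue_number X Hcomp _ Hlocal) as [s [Hs Hleb]].
  exists s; split; [exact Hs|]; intros a b Hab.
  destruct (Hleb a) as [c [r [Hc [_ Hball]]]].
  apply same_itinerary_trans with c; [apply same_itinerary_sym|];
    apply Hc, Hball; [rewrite dist_self; lra | exact Hab].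
Qed.

Lemma periodic_equicontinuous : equicontinuous f finv.
Proof.
  intros eps Heps; destruct (uniform_itinerary_tracking eps Heps) as [L [Hsmall [de [Hde Hclose]]]].
  exists de; split; [exact Hde|]; intros a b Hab i; apply Rlt_le, Hsmall.
  destruct i as [|p|p]; unfold zpow;
    [| apply same_itinerary_iter_f | apply same_itinerary_iter_finv]; apply Hclose, Hab.
Qed.

Lemma pseudo_orbit_same_itinerary L delta (xs : nat -> X) m :
  (forall a b, d a b <= delta -> same_itinerary L a b) ->
  (forall i, (i < m)%nat -> d (f (xs i)) (xs (S i)) <= delta) ->
  forall i, (i <= m)%nat -> same_itinerary L (Nat.iter i f (xs 0%nat)) (xs i).
Proof.
  intros Hclose Hstep i; induction i as [|i IH]; intro Hi.
  - intro n; split; apply same_cells_refl.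
  - apply same_itinerary_trans with (f (xs i)).
    + rewrite Nat.iter_succ; apply same_itinerary_f, IH; lia.
    + apply Hclose, Hstep; lia.
Qed.

Lemma periodic_orbit_isolated z : exists rho, 0 < rho /\
  forall k, d (Nat.iter k f z) z < rho -> Nat.iter k f z = z.
Proof.
  destruct (Hper z) as [q [Hq Hz]].
  destruct (list_positive_lower_bound
    (fun k => let e := d (Nat.iter k f z) z in if Rlt_dec 0 e then e else 1) (seq 0 q))
    as [rho [Hrho Hmin]]; [intros k _; simpl; destruct Rlt_dec; lra|].
  exists rho; split; [exact Hrho|]; intros k Hk.
  rewrite (iter_period_mod X f q z k Hz) in *.
  assert (Hkq : In (k mod q)%nat (seq 0 q))
    by (apply in_seq; pose proof (Nat.mod_upper_bound k q ltac:(lia)); lia).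
  specialize (Hmin _ Hkq).
  simpl in Hmin; destruct Rlt_dec as [Hpos|Hzero]; [lra|].
  apply Defs.dist_zero; pose proof (Defs.dist_nonneg X (Nat.iter (k mod q) f z) z); lra.
Qed.

Lemma local_periodic_shadowing eps z : 0 < eps -> exists s, 0 < s /\
  forall y, d z y < s -> forall m, d (Nat.iter m f y) y < s ->
    Nat.iter m f z = z /\ forall n, d (Nat.iter n f z) (Nat.iter n f y) < eps.
Proof.
  intro Heps; destruct (periodic_orbit_isolated z) as [rho [Hrho Hiso]].
  destruct (uniform_itinerary_tracking (Rmin (rho / 3) eps)) as [L [Hsmall [de [Hde Hclose]]]];
    [apply Rmin_glb_lt; lra|].
  exists (Rmin de (rho / 3)); split; [apply Rmin_glb_lt; lra|]; intros y Hy m Hm.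
  pose proof (Rmin_l de (rho / 3)); pose proof (Rmin_r de (rho / 3)).
  pose proof (Rmin_l (rho / 3) eps); pose proof (Rmin_r (rho / 3) eps).
  assert (Horbit : forall n, d (Nat.iter n f z) (Nat.iter n f y) < Rmin (rho / 3) eps)
    by (intro n; apply Hsmall, same_itinerary_iter_f, Hclose; lra).
  split; [|intro n; specialize (Horbit n); lra].
  apply Hiso; specialize (Horbit m).
  pose proof (Defs.dist_triangle X (Nat.iter m f z) (Nat.iter m f y) z).
  pose proof (Defs.dist_triangle X (Nat.iter m f y) y z).
  rewrite (Defs.dist_sym X y z) in *; lra.
Qed.

Lemma periodic_strict_periodic_shadowing : strict_periodic_shadowing f.
Proof.
  intros eps Heps.
  destruct (lebesgue_number X Hcomp (fun z s => forall y, d z y < s ->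
    forall m, d (Nat.iter m f y) y < s ->
      Nat.iter m f z = z /\ forall n, d (Nat.iter n f z) (Nat.iter n f y) < eps / 2))
    as [sg [Hsg Hleb]]; [intro z; apply local_periodic_shadowing; lra|].
  destruct (uniform_itinerary_tracking (Rmin sg (eps / 2))) as [L [Hsmall [de [Hde Hclose]]]];
    [apply Rmin_glb_lt; lra|].
  pose proof (Rmin_l sg (eps / 2)); pose proof (Rmin_r sg (eps / 2)).
  exists de; split; [exact Hde|]; intros xs m Hm Hstep Hcyc.
  pose proof (pseudo_orbit_same_itinerary L de xs m Hclose Hstep) as Htrack.
  destruct (Hleb (xs 0%nat)) as [c [r [Hc [Hsgr Hball]]]].
  assert (Hreturn : d (Nat.iter m f (xs 0%nat)) (xs 0%nat) < r).
  { pose proof (Hsmall _ _ (Htrack m (le_n m))); rewrite <- Hcyc in *; lra. }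
  destruct (Hc (xs 0%nat) (Hball _ ltac:(rewrite dist_self; lra)) m Hreturn) as [Hfix Hnear].
  exists c; split; [exact Hfix|]; intros i Hi.
  pose proof (Hsmall _ _ (Htrack i Hi)); specialize (Hnear i).
  pose proof (Defs.dist_triangle X (xs i) (Nat.iter i f (xs 0%nat)) (Nat.iter i f c)).
  rewrite (Defs.dist_sym X (xs i)), (Defs.dist_sym X (Nat.iter i f (xs 0%nat))) in *; lra.
Qed.

End Dynamics.

Theorem proposition1p1 (X : MetricSpace) (f finv : X -> X)
  (Hcomp : @compact_space X)
  (Hhomeo : is_homeomorphism f finv)
  (Hdim : @dim_zero X)
  (Hper : forall x : X, periodic_point f x) :
  equicontinuous f finv /\ strict_periodic_shadowing f.
Proof.
  split.
  - exact (periodic_equicontinuous X f finv Hcomp Hhomeo Hdim Hper).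
  - exact (periodic_strict_periodic_shadowing X f finv Hcomp Hhomeo Hdim Hper).
Qed.
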